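(* Let $(P,U)$ and $(Q,V)$ be real affine spaces ($P$ modelled on the vector space $U$, $Q$ on $V$), let $g:P\to Q$ be a mapping and $f\in A(Q)$. For each $n\in\mathbb N$, $p\in P$ and $u_1,\dots,u_n\in U$, $$\delta^n(f\circ g)(p;u_1,\dots,u_n)=\sum_{\{I^1,\dots,I^k\}}\delta^k f\Big(g(p);\,\delta^{|I^1|}g(p;\mathbf u^{I^1}),\dots,\delta^{|I^k|}g(p;\mathbf u^{I^k})\Big),$$ where the sum runs over all finite sets $\{I^1,\dots,I^k\}$ ($k\ge0$) of pairwise distinct nonempty subsets of $N=\{1,\dots,n\}$ with $\bigcup_{i=1}^k I^i=N$ (the blocks may overlap).
   Context: $A(Q)$ is the space of real functions on $Q$. For $I=\{i_1<\dots<i_m\}\subset N$, $\mathbf u^I=(u_{i_1},\dots,u_{i_m})$. The $k$-th polarization of $f\in A(Q)$ is $\delta^0f=f$ and, for $k\ge1$, $\delta^kf(q;v_1,\dots,v_k)=(-1)^k\sum_{J\subset\{1,\dots,k\}}(-1)^{|J|}f(q+\sum_{j\in J}v_j)$ (the $J=\emptyset$ term being $f(q)$); it is symmetric in the $v_j$. For a mapping $g:P\to Q$ and $m\ge1$, $\delta^m g(p;u_1,\dots,u_m)=(-1)^m\sum_{J\subset\{1,\dots,m\}}(-1)^{|J|}g(p+\sum_{j\in J}u_j)\in V$ (an affine combination of points with coefficients summing to $0$, hence a vector of $V$). *)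

From HB Require Import structures.
From mathcomp Require Import all_boot all_order all_algebra.
From mathcomp Require Import reals.
Set Implicit Arguments. Unset Strict Implicit. Unset Printing Implicit Defensive.
Import Order.TTheory GRing.Theory Num.Theory.
Local Open Scope ring_scope.

(* A (real) affine space structure on the type P of points, modelled on the
   vector space U : translation [vadd p u] = p + u and difference
   [vsub q p] = q - p (the unique vector carrying p to q). *)
Record affine (R : pzRingType) (U : lmodType R) (P : Type) := Affine {
  vadd : P -> U -> P;
  vsub : P -> P -> U;
  vadd0 : forall p, vadd p 0 = p;
  vaddA : forall p u v, vadd (vadd p u) v = vadd p (u + v);
  vsubK : forall p q, vadd p (vsub q p) = q;
  vaddK : forall p u, vsub (vadd p u) p = u
}.

Definition polar (R : pzRingType) (U : lmodType R) (P : Type) (aP : affine U P)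
    (f : P -> R) (q : P) (vs : seq U) : R :=
  (-1) ^+ size vs *
  \sum_(J : {set 'I_(size vs)}) (-1) ^+ #|J| *
      f (vadd aP q (\sum_(j in J) nth 0 vs j)).

(* m-th polarization (m = size us >= 1) of a mapping g : P -> Q, at p:
   the vector (-1)^m sum_J (-1)^|J| g(p + sum_{j in J} u_j) of V; since the
   coefficients sum to 0 it is computed as the combination of the vectors
   g(p + sum_J u_j) - g(p). *)
Definition mpolar (R : pzRingType) (U V : lmodType R) (P Q : Type)
    (aP : affine U P) (aQ : affine V Q) (g : P -> Q) (p : P) (us : seq U) : V :=
  (-1) ^+ size us *:
  \sum_(J : {set 'I_(size us)}) ((-1) ^+ #|J| *:
      vsub aQ (g (vadd aP p (\sum_(j in J) nth 0 us j))) (g p)).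

From HB Require Import structures.
From mathcomp Require Import all_boot all_order all_algebra.
From mathcomp Require Import reals.
Import Order.TTheory GRing.Theory Num.Theory.
Local Open Scope ring_scope.

(* Moebius inversion on the subsets of a finite set turns both polarizations
   into Newton expansions:
     f (q + sum_(y in T) v_y) = sum_(S subset T) delta^|S| f (q; v_S),
     g (p + u_J) = g p + sum_(B subset J, B nonempty) delta^|B| g (p; u_B).
   Substituting the second into the first expresses f (g (p + u_J)) as a sum
   over families S of nonempty subsets of J.  In the alternating sum over J a
   family S survives only if it covers N, since
   sum_(\bigcup S subset J subset N) (-1)^|J| vanishes unless \bigcup S = N. *)

Lemma sum_sign_subset_interval {R : pzRingType} {X : finType} (K T : {set X}) :
  \sum_(S : {set X} | (S \subset T) && (K \subset S)) (-1) ^+ #|S|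
  = (if K == T then (-1) ^+ #|T| else 0 : R).
Proof.
case: eqP => [<-|neKT].
  by rewrite (big_pred1 K) // => S /=; rewrite eqEsubset.
have [sKT|nsKT] := boolP (K \subset T); last first.
  rewrite big_pred0 // => S; apply: contraNF nsKT => /andP [sST sKS].
  exact: subset_trans sKS sST.
have /properP [_ [x xT xK]] : K \proper T.
  by rewrite properEneq sKT andbT; apply/eqP.
(* Adding x, a point of T outside K, flips the sign of each term. *)
rewrite (bigID (fun S : {set X} => x \in S)) /=.
rewrite (reindex_onto (fun S => x |: S) (fun S => S :\ x)) /=; last first.
  by move=> S /andP [_ xS]; rewrite setD1K.
apply/eqP; rewrite addr_eq0 -sumrN; apply/eqP/eq_big => S.
  have [xS|xS] := boolP (x \in S).
    suff /negbTE -> : (x |: S) :\ x != S by rewrite !andbF.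
    by apply: contraTneq xS => <-; rewrite setD11.
  rewrite setU1K // setU11 eqxx !andbT subUset sub1set xT /=; congr andb.
  by rewrite -[in K \subset S](setU1K xS) subsetD1 xK andbT.
move=> /andP [_ /eqP SE]; have xS : x \notin S by rewrite -SE setD11.
by rewrite cardsU1 xS add1n exprS mulN1r.
Qed.

Lemma subset_moebius {R : pzRingType} {Z : lmodType R} {X : finType}
    (G : {set X} -> Z) (T : {set X}) :
  \sum_(S : {set X} | S \subset T)
     (-1) ^+ #|S| *: \sum_(K : {set X} | K \subset S) (-1) ^+ #|K| *: G K = G T.
Proof.
under eq_bigr do rewrite scaler_sumr.
rewrite (exchange_big_dep (fun K : {set X} => K \subset T)) /=; last first.
  by move=> S K sST sKS; apply: subset_trans sKS sST.
under eq_bigr do rewrite -scaler_suml sum_sign_subset_interval.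
rewrite (bigD1 T) //= eqxx big1 ?addr0 => [|K /andP [_ /negbTE ->]].
  by rewrite scalerA -exprD -signr_odd oddD addbb scale1r.
by rewrite scale0r.
Qed.

Lemma sum_subsets_inj {I X : finType} {Z : nmodType} (F : {set X} -> Z)
    (h : I -> X) (A : {set X}) :
  injective h -> h @: [set: I] = A ->
  \sum_(J : {set I}) F (h @: J) = \sum_(K : {set X} | K \subset A) F K.
Proof.
move=> hinj <-; symmetry; rewrite (reindex (fun J : {set I} => h @: J)) /=.
  by apply: eq_bigl => J; rewrite imsetS ?subsetT.
exists (fun K : {set X} => h @^-1: K) => [J _ | K sKA].
  by apply/setP => j; rewrite inE mem_imset.
apply/setP => x; apply/imsetP/idP => [[j] | xK]; first by rewrite inE => ? ->.
have /imsetP [j _ xE] := subsetP sKA x xK.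
by exists j; rewrite // inE -xE.
Qed.

Lemma sum_subsets_enum {X : finType} (A : {set X}) {U : nmodType} (w : X -> U)
    {Z : nmodType} (Phi : nat -> U -> Z) :
  \sum_(J : {set 'I_(size [seq w i | i <- enum A])})
      Phi #|J| (\sum_(j in J) nth 0 [seq w i | i <- enum A] j) =
  \sum_(K : {set X} | K \subset A) Phi #|K| (\sum_(i in K) w i).
Proof.
set s := [seq w i | i <- enum A].
have sizeA : size s = #|A| by rewrite size_map cardE.
pose h (j : 'I_(size s)) : X := @enum_val X (pred_of_set A) (cast_ord sizeA j).
have hinj : injective h by move=> j j' /enum_val_inj /cast_ord_inj.
have hA : h @: [set: _] = A.
  apply/setP => x; apply/imsetP/idP => [[j _ ->] | xA]; first exact: enum_valP.
  exists (cast_ord (esym sizeA) (enum_rank_in xA x)) => //.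
  by rewrite /h cast_ordKV enum_rankK_in.
rewrite -(sum_subsets_inj (fun K => Phi #|K| (\sum_(i in K) w i)) _ _ hinj hA).
apply: eq_bigr => J _; rewrite card_imset // big_imset /=; last first.
  by move=> ? ? _ _; apply: hinj.
congr Phi; apply: eq_bigr => j _.
rewrite (nth_map (h j)); last by rewrite -cardE -sizeA.
by rewrite {2}/h (enum_val_nth (h j)).
Qed.

Lemma polar_enum {R : pzRingType} {U : lmodType R} {P : Type} (aP : affine U P)
    (f : P -> R) (q : P) {X : finType} (A : {set X}) (w : X -> U) :
  polar aP f q [seq w i | i <- enum A] =
  (-1) ^+ #|A| * \sum_(K : {set X} | K \subset A)
      (-1) ^+ #|K| * f (vadd aP q (\sum_(i in K) w i)).
Proof.
rewrite /polar (sum_subsets_enum _ _ (fun k x => (-1) ^+ k * f (vadd aP q x))).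
by rewrite size_map -cardE.
Qed.

Lemma mpolar_enum {R : pzRingType} {U V : lmodType R} {P Q : Type}
    (aP : affine U P) (aQ : affine V Q) (g : P -> Q) (p : P)
    {X : finType} (A : {set X}) (w : X -> U) :
  mpolar aP aQ g p [seq w i | i <- enum A] =
  (-1) ^+ #|A| *: \sum_(K : {set X} | K \subset A)
      (-1) ^+ #|K| *: vsub aQ (g (vadd aP p (\sum_(i in K) w i))) (g p).
Proof.
rewrite /mpolar (sum_subsets_enum _ _
  (fun k x => (-1) ^+ k *: vsub aQ (g (vadd aP p x)) (g p))).
by rewrite size_map -cardE.
Qed.

Section Polarization.

Context {R : pzRingType} {U V : lmodType R} {P Q : Type}.
Variables (aP : affine U P) (aQ : affine V Q).

Lemma vsubpp (q : Q) : vsub aQ q q = 0.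
Proof. by have := vaddK aQ q 0; rewrite vadd0. Qed.

Lemma polar_newton (f : Q -> R) (q : Q) {Y : finType} (v : Y -> V)
    (T : {set Y}) :
  f (vadd aQ q (\sum_(y in T) v y)) =
  \sum_(S : {set Y} | S \subset T) polar aQ f q [seq v y | y <- enum S].
Proof.
rewrite -[LHS](subset_moebius (Z := R^o)
  (fun K => f (vadd aQ q (\sum_(y in K) v y)))).
by apply: eq_bigr => S _; rewrite polar_enum.
Qed.

Lemma mpolar_newton (g : P -> Q) (p : P) {X : finType} (w : X -> U)
    (J : {set X}) :
  vsub aQ (g (vadd aP p (\sum_(i in J) w i))) (g p) =
  \sum_(B : {set X} | B \subset J) mpolar aP aQ g p [seq w i | i <- enum B].
Proof.
rewrite -[LHS](subset_moebius
  (fun K => vsub aQ (g (vadd aP p (\sum_(i in K) w i))) (g p))).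
by apply: eq_bigr => B _; rewrite mpolar_enum.
Qed.

Lemma mpolar_newton_vadd (g : P -> Q) (p : P) {X : finType} (w : X -> U)
    (J : {set X}) :
  g (vadd aP p (\sum_(i in J) w i)) =
  vadd aQ (g p) (\sum_(B in powerset J :\ set0)
                   mpolar aP aQ g p [seq w i | i <- enum B]).
Proof.
have mpolar0 : mpolar aP aQ g p [seq w i | i <- enum set0] = 0.
  have := mpolar_newton g p w set0.
  by rewrite big_set0 vadd0 vsubpp (big_pred1 set0) // => B; rewrite subset0.
rewrite -[LHS](vsubK aQ (g p)) mpolar_newton (bigD1 set0) ?sub0set //=.
rewrite mpolar0 add0r; congr (vadd _ _ _); apply: eq_bigl => B.
by rewrite in_setD1 powersetE andbC.
Qed.

Lemma comp_polar_newton (f : Q -> R) (g : P -> Q) (p : P) {X : finType}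
    (w : X -> U) (J : {set X}) :
  (f \o g) (vadd aP p (\sum_(i in J) w i)) =
  \sum_(S : {set {set X}} | S \subset powerset J :\ set0)
     polar aQ f (g p)
       [seq mpolar aP aQ g p [seq w i | i <- enum B] | B : {set X} <- enum S].
Proof. by rewrite /= mpolar_newton_vadd polar_newton. Qed.

End Polarization.

Lemma subset_nonempty_powerset {X : finType} (S : {set {set X}}) (J : {set X}) :
  (S \subset powerset J :\ set0) =
  (set0 \notin S) && (\bigcup_(B in S) B \subset J).
Proof.
apply/subsetP/andP => [sSPJ | [S0 /bigcupsP sSJ] B BS].
  split; first by apply/negP => /sSPJ; rewrite setD11.
  by apply/bigcupsP => B /sSPJ; rewrite in_setD1 powersetE => /andP [].
rewrite in_setD1 powersetE sSJ // andbT.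
by apply: contraNneq S0 => <-.
Qed.

Lemma sum_families_cover {R : pzRingType} {X : finType}
    (F : {set {set X}} -> R) :
  (-1) ^+ #|X| * \sum_(J : {set X}) (-1) ^+ #|J| *
     \sum_(S : {set {set X}} | S \subset powerset J :\ set0) F S =
  \sum_(S : {set {set X}} |
          (set0 \notin S) && (\bigcup_(B in S) B == [set: X])) F S.
Proof.
under eq_bigr do rewrite mulr_sumr.
rewrite (exchange_big_dep (fun S : {set {set X}} => set0 \notin S)) /=;
  last by move=> J S _; rewrite subset_nonempty_powerset => /andP [].
rewrite mulr_sumr [RHS]big_mkcondr; apply: eq_bigr => S S0 /=.
rewrite (eq_bigl (fun J : {set X} =>
  (J \subset [set: X]) && (\bigcup_(B in S) B \subset J))); last first.
  by move=> J; rewrite subsetT subset_nonempty_powerset S0.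
rewrite -mulr_suml sum_sign_subset_interval.
case: eqP => _; last by rewrite mul0r mulr0.
by rewrite cardsT mulrA -exprD -signr_odd oddD addbb mul1r.
Qed.

Theorem proposition4 (R : realType) (U V : lmodType R) (P Q : Type)
    (aP : affine U P) (aQ : affine V Q) (g : P -> Q) (f : Q -> R)
    (n : nat) (p : P) (u : 'I_n -> U) :
  polar aP (f \o g) p [seq u i | i <- enum 'I_n] =
  \sum_(S : {set {set 'I_n}} |
          (set0 \notin S) && (\bigcup_(B in S) B == [set: 'I_n]))
     polar aQ f (g p)
       [seq mpolar aP aQ g p [seq u i | i <- enum B] | B : {set 'I_n} <- enum S].
Proof.
have -> : enum 'I_n = enum [set: 'I_n] by rewrite enum_setT enumT.
rewrite -sum_families_cover polar_enum cardsT.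
congr (_ * _); apply: eq_big => [J | J _]; first exact: subsetT.
by rewrite (comp_polar_newton aP aQ).
Qed.
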